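(* There exists a unique root-lattice-graded $\mathbb{Q}(q)$-algebra surjection $\pi_B:U_q^+\to\mathcal{P}_B$ with $\pi_B(E_i)=e_i$ for all $i=1,\dots,n$.
   Context: $\mathfrak{g}$ is a symmetrizable Kac–Moody algebra of rank $n$ with Cartan matrix $A=(a_{ij})$; $d_1,\dots,d_n$ are coprime positive integers with $c_{ij}:=d_ia_{ij}=d_ja_{ji}$, and the invariant form is normalized by $(\alpha_i,\alpha_j)=c_{ij}$. For each pair $i<j$ with $a_{ij}\ne0$ choose $\sigma_{ij}\in\{\pm1\}$, and set $b_{ij}=\sigma_{ij}c_{ij}$ ($i<j$), $b_{ii}=0$, $b_{ij}=-\sigma_{ji}c_{ij}$ ($i>j$) (with $b_{ij}=0$ when $a_{ij}=0$). $U_q^+$ is the subalgebra of the quantum enveloping algebra $U_q(\mathfrak{g})$ generated by $E_1,\dots,E_n$ (equivalently, the $\mathbb{Q}(q)$-algebra on $E_i$ subject to the quantum Serre relations $\sum_{k=0}^{1-a_{ij}}(-1)^k\binom{1-a_{ij}}{k}_{q_i}E_i^{1-a_{ij}-k}E_jE_i^k=0$, $i\ne j$), graded by weight with $E_i$ of weight $\alpha_i$. $\mathcal{P}_B$ is the $\mathbb{Q}(q)$-algebra generated by $e_1,\dots,e_n$ with relations $e_ie_j=q^{b_{ij}}e_je_i$, graded by giving $e_i$ weight $\alpha_i$. *)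

From HB Require Import structures.
From mathcomp Require Import all_boot all_order all_algebra fraction.
Set Implicit Arguments. Unset Strict Implicit. Unset Printing Implicit Defensive.
Import Order.TTheory GRing.Theory Num.Theory.
Local Open Scope ring_scope.

Definition Qq : fieldType := {fraction {poly rat}}.
Definition qq : Qq := @FracField.tofrac _ ('X : {poly rat}).

Definition qint (F : fieldType) (t : F) (m : nat) : F :=
  (t ^+ m - t ^- m) / (t - t^-1).
Definition qfact (F : fieldType) (t : F) (m : nat) : F :=
  \prod_(1 <= k < m.+1) qint t k.
Definition qbinom (F : fieldType) (t : F) (m k : nat) : F :=
  qfact t m / (qfact t k * qfact t (m - k)).

Definition symmetrizable_GCM (n : nat) (A : 'M[int]_n) (d : 'I_n -> nat) : Prop :=
  [/\ (forall i, A i i = 2),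
      (forall i j, i != j -> A i j <= 0),
      (forall i j, (A i j == 0) = (A j i == 0)),
      (forall i, (0 < d i)%N) /\ (\big[gcdn/0%N]_(i < n) d i = 1%N) &
      (forall i j, (d i)%:Z * A i j = (d j)%:Z * A j i)].

Definition cmat (n : nat) (A : 'M[int]_n) (d : 'I_n -> nat) (i j : 'I_n) : int :=
  (d i)%:Z * A i j.

Definition sign_choice (n : nat) (A : 'M[int]_n) (sigma : 'I_n -> 'I_n -> int) : Prop :=
  forall i j : 'I_n, (i < j)%N -> A i j != 0 -> sigma i j = 1 \/ sigma i j = -1.

Definition bmat (n : nat) (A : 'M[int]_n) (d : 'I_n -> nat)
    (sigma : 'I_n -> 'I_n -> int) (i j : 'I_n) : int :=
  if (i < j)%N then sigma i j * cmat A d i j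
  else if i == j then 0
  else - (sigma j i * cmat A d i j).

(* Monomials, weights (root lattice = Z^n in the basis of simple roots). *)
Definition monom (K : fieldType) (R : algType K) (n : nat) (x : 'I_n -> R)
    (w : seq 'I_n) : R := \prod_(i <- w) x i.
Definition wt (n : nat) (w : seq 'I_n) : 'I_n -> int := fun j => (count_mem j w)%:Z.

Definition in_span (K : fieldType) (R : algType K) (n : nat) (x : 'I_n -> R) (v : R) : Prop :=
  exists s : seq (seq 'I_n * K), v = \sum_(p <- s) p.2 *: monom x p.1.
Definition in_weight (K : fieldType) (R : algType K) (n : nat) (x : 'I_n -> R)
    (beta : 'I_n -> int) (v : R) : Prop :=
  exists s : seq (seq 'I_n * K),
    (forall p, p \in s -> wt p.1 =1 beta) /\ v = \sum_(p <- s) p.2 *: monom x p.1.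

(* (A, x) is the K-algebra presented by generators x_1..x_n and relations Rel:
   x satisfies Rel, x generates A, and every family y in an algebra B
   satisfying Rel extends uniquely along x to a K-algebra morphism A -> B. *)
Definition presents (K : fieldType) (n : nat) (A : algType K) (x : 'I_n -> A)
    (Rel : forall B : algType K, ('I_n -> B) -> Prop) : Prop :=
  [/\ Rel A x,
      (forall v, in_span x v),
      (forall (B : algType K) (y : 'I_n -> B), Rel B y ->
          exists f : {lrmorphism A -> B}, forall i, f (x i) = y i) &
      (forall (B : algType K) (f g : {lrmorphism A -> B}),
          (forall i, f (x i) = g (x i)) -> f =1 g)].

Definition serre_rels (n : nat) (A : 'M[int]_n) (d : 'I_n -> nat)
    (B : algType Qq) (E : 'I_n -> B) : Prop :=
  forall i j : 'I_n, i != j ->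
    let m := `|1 - A i j|%N in
    \sum_(k < m.+1) ((-1) ^+ k * qbinom (qq ^+ d i) m k) *:
        (E i ^+ (m - k) * E j * E i ^+ k) = 0.

Definition qcomm_rels (n : nat) (b : 'I_n -> 'I_n -> int)
    (B : algType Qq) (e : 'I_n -> B) : Prop :=
  forall i j : 'I_n, e i * e j = (qq ^ b i j) *: (e j * e i).

(* In P_B the generators q-commute, e_j e_i = q^(b_ji) e_i e_j, so every Serre
   monomial e_i^(m+1-k) e_j e_i^k equals q^(k b_ji) e_i^(m+1) e_j, and the Serre
   relation for (i, j) collapses to the scalar identity
   sum_k (-1)^k [m+1 choose k]_t s^k = 0, with t = q^(d_i), m = -a_ij and
   s = q^(b_ji) = t^(-m) or t^m according to the sign sigma.  By the q-Pascal
   rule this alternating sum S_(m+1)(z) equals (1 - t^m z) S_m(t^-1 z), so it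
   vanishes at z = t^-m, and at z = t^m by the symmetry t <-> t^-1 of
   q-binomials; all q-integers involved are nonzero as q is transcendental.
   The universal property of U_q^+ then yields pi_B; it sends monomials in the
   E_i to monomials in the e_i, hence preserves weights and is onto, and it is
   unique because the E_i generate U_q^+. *)

From HB Require Import structures.
From mathcomp Require Import all_boot all_order all_algebra fraction.
From mathcomp Require Import ring.
Set Implicit Arguments.
Unset Strict Implicit.
Unset Printing Implicit Defensive.
Import Order.TTheory GRing.Theory Num.Theory.
Local Open Scope ring_scope.

Section QBinomial.
Variable F : fieldType.

Lemma qintV (t : F) k : qint t^-1 k = qint t k.
Proof. by rewrite /qint !exprVn !invrK -[t^-1 - t]opprB invrN mulrN -mulNr opprB. Qed.

Lemma qfactV (t : F) m : qfact t^-1 m = qfact t m.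
Proof. by apply: eq_bigr => k _; rewrite qintV. Qed.

Lemma qbinomV (t : F) m k : qbinom t^-1 m k = qbinom t m k.
Proof. by rewrite /qbinom !qfactV. Qed.

Lemma qfact0 (t : F) : qfact t 0 = 1.
Proof. by rewrite /qfact big_geq. Qed.

Lemma qfactS (t : F) m : qfact t m.+1 = qfact t m * qint t m.+1.
Proof. by rewrite /qfact big_nat_recr. Qed.

Variable t : F.
Hypothesis qint_neq0 : forall {k}, (0 < k)%N -> qint t k != 0.

Lemma q_neq0 : t != 0.
Proof.
apply: contraNneq _ (qint_neq0 (ltn0Sn 0)) => ->.
by rewrite /qint invr0 subr0 invr0 mulr0.
Qed.

Lemma qsqr_sub1_neq0 : t * t - 1 != 0.
Proof.
apply: contraNneq _ (qint_neq0 (ltn0Sn 0)) => /eqP; rewrite subr_eq0 /qint => /eqP tt1.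
have -> : t^-1 = t by rewrite -[t^-1]mulr1 -tt1 mulKf // q_neq0.
by rewrite expr1 subrr mul0r.
Qed.

Lemma qintD a b :
  qint t (a + b) = t ^- a * qint t b + t ^+ b * qint t a.
Proof.
have t0 := q_neq0; have ta : t ^+ a != 0 by rewrite expf_neq0.
have tb : t ^+ b != 0 by rewrite expf_neq0.
by rewrite /qint exprD invfM; field; rewrite t0 qsqr_sub1_neq0 ta tb.
Qed.

Lemma qfact_neq0 m : qfact t m != 0.
Proof.
by elim: m => [|m IHm]; rewrite ?qfact0 ?oner_neq0 // qfactS mulf_neq0 ?qint_neq0.
Qed.

Lemma qbinom0 m : qbinom t m 0 = 1.
Proof. by rewrite /qbinom subn0 qfact0 mul1r divff // qfact_neq0. Qed.

Lemma qbinomm m : qbinom t m m = 1.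
Proof. by rewrite /qbinom subnn qfact0 mulr1 divff // qfact_neq0. Qed.

Lemma qbinomS m k : (k < m)%N ->
  qbinom t m.+1 k.+1 = t ^- k.+1 * qbinom t m k.+1 + t ^+ (m - k) * qbinom t m k.
Proof.
move=> /subnKC <-; move: (m - k.+1)%N => b; rewrite /qbinom.
have -> : ((k.+1 + b).+1 - k.+1 = b.+1)%N by rewrite -addnS addKn.
have -> : (k.+1 + b - k = b.+1)%N by rewrite addSnnS addKn.
rewrite addKn qfactS (qfactS _ k) (qfactS _ b) -addnS qintD.
by field; rewrite !qint_neq0 // !qfact_neq0 expf_neq0 // q_neq0.
Qed.

(* [qbinom t m k] is junk for [k > m]; [qchoose] vanishes there, so that
   Pascal's rule [qchooseS] holds for every [k]. *)
Definition qchoose m k := if (k <= m)%N then qbinom t m k else 0.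

Lemma qchoose0 m : qchoose m 0 = 1.
Proof. by rewrite /qchoose qbinom0. Qed.

Lemma qchoose_gt m k : (m < k)%N -> qchoose m k = 0.
Proof. by rewrite /qchoose ltnNge => /negbTE->. Qed.

Lemma qchooseS m k :
  qchoose m.+1 k.+1 = t ^- k.+1 * qchoose m k.+1 + t ^+ (m - k) * qchoose m k.
Proof.
rewrite /qchoose ltnS; case: ltngtP => [km|mk|<-].
- by rewrite qbinomS.
- by rewrite !mulr0 addr0.
- by rewrite mulr0 add0r subnn expr0 mul1r !qbinomm.
Qed.

Definition qbinom_alt_sum m (z : F) := \sum_(k < m.+1) (-1) ^+ k * qchoose m k * z ^+ k.

Lemma qbinom_alt_sum_widen m (z : F) :
  \sum_(k < m.+2) (-1) ^+ k * qchoose m k * z ^+ k = qbinom_alt_sum m z.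
Proof. by rewrite big_ord_recr /= qchoose_gt // mulr0 mul0r addr0. Qed.

Lemma qbinom_alt_sumS m (z : F) :
  qbinom_alt_sum m.+1 z = (1 - t ^+ m * z) * qbinom_alt_sum m (t^-1 * z).
Proof.
have lower : 1 + \sum_(k < m.+1) (-1) ^+ k.+1 * (t ^- k.+1 * qchoose m k.+1) * z ^+ k.+1
    = qbinom_alt_sum m (t^-1 * z).
  rewrite -qbinom_alt_sum_widen [RHS]big_ord_recl qchoose0 !expr0 !mulr1.
  by congr (_ + _); apply: eq_bigr => k _; rewrite lift0 exprMn exprVn; ring.
have upper : \sum_(k < m.+1) (-1) ^+ k.+1 * (t ^+ (m - k) * qchoose m k) * z ^+ k.+1
    = - (t ^+ m * z * qbinom_alt_sum m (t^-1 * z)).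
  rewrite /qbinom_alt_sum mulr_sumr -sumrN; apply: eq_bigr => k _.
  rewrite exprB ?leq_ord ?unitfE ?q_neq0 // exprMn exprVn !exprS; ring.
rewrite [LHS]/qbinom_alt_sum big_ord_recl qchoose0 !expr0 !mulr1.
under eq_bigr => k _ do rewrite qchooseS mulrDr mulrDl.
by rewrite big_split addrA lower upper mulrBl mul1r.
Qed.

Lemma qbinom_alt_sum_root m : qbinom_alt_sum m.+1 (t ^- m) = 0.
Proof. by rewrite qbinom_alt_sumS divff ?subrr ?mul0r // expf_neq0 // q_neq0. Qed.

End QBinomial.

Lemma serre_coef_sum (F : fieldType) (t s : F) m :
  (forall k, (0 < k)%N -> qint t k != 0) -> s = t ^- m \/ s = t ^+ m ->
  \sum_(k < m.+2) ((-1) ^+ k * qbinom t m.+1 k) * s ^+ k = 0.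
Proof.
move=> qint_neq0 s_pm.
have alt_sum (u z : F) : \sum_(k < m.+2) ((-1) ^+ k * qbinom u m.+1 k) * z ^+ k
    = qbinom_alt_sum u m.+1 z.
  by apply: eq_bigr => k _; rewrite /qchoose -ltnS ltn_ord.
have qintV_neq0 k : (0 < k)%N -> qint t^-1 k != 0 by rewrite qintV; apply: qint_neq0.
case: s_pm => ->; first by rewrite alt_sum qbinom_alt_sum_root.
rewrite -[t in t ^+ m]invrK exprVn -[RHS](qbinom_alt_sum_root qintV_neq0 m) -alt_sum.
by apply: eq_bigr => k _; rewrite qbinomV.
Qed.

Lemma subr_inv_neq0 (F : fieldType) (x : F) : x != 0 -> x ^+ 2 != 1 -> x - x^-1 != 0.
Proof.
move=> x0; apply: contraNneq => /eqP; rewrite subr_eq0 => /eqP x_inv.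
by rewrite expr2 {2}x_inv mulfV.
Qed.

Lemma qint_neq0_of_nonroot (F : fieldType) (t : F) k : t != 0 ->
  (forall N, (0 < N)%N -> t ^+ N != 1) -> (0 < k)%N -> qint t k != 0.
Proof.
move=> t0 t_nonroot k0; rewrite /qint mulf_neq0 ?invr_eq0 //.
- by rewrite subr_inv_neq0 ?expf_neq0 // -exprM t_nonroot // muln_gt0 k0.
- by rewrite -[t in t - _]expr1 subr_inv_neq0 ?t_nonroot.
Qed.

Lemma qq_neq0 : qq != 0.
Proof. by rewrite /qq -tofrac0 tofrac_eq polyX_eq0. Qed.

Lemma qqXn_neq1 N : (0 < N)%N -> qq ^+ N != 1.
Proof.
move=> N_gt0; rewrite /qq -tofracXn -tofrac1 tofrac_eq.
apply: contraTneq N_gt0 => /(congr1 (fun p : {poly rat} => size p)).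
by rewrite size_polyXn size_poly1 => -[->].
Qed.

Lemma qint_qqXn_neq0 e k : (0 < e)%N -> (0 < k)%N -> qint (qq ^+ e) k != 0.
Proof.
move=> e_gt0; apply: qint_neq0_of_nonroot; first by rewrite expf_neq0 ?qq_neq0.
by move=> N N_gt0; rewrite -exprM qqXn_neq1 // muln_gt0 e_gt0.
Qed.

Section QCommutation.
Variables (R : pzRingType) (V : algType R).

Lemma mulr_expr_qcomm (x y : V) (s : R) : y * x = s *: (x * y) ->
  forall k, y * x ^+ k = s ^+ k *: (x ^+ k * y).
Proof.
move=> yx; elim=> [|k IHk]; first by rewrite !expr0 mulr1 mul1r scale1r.
rewrite exprSr mulrA IHk -scalerAl -[x ^+ k * y * x]mulrA yx -scalerAr scalerA.
by rewrite mulrA [s ^+ k.+1]exprSr.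
Qed.

Lemma qcomm_scaled_sum (x y : V) (s : R) N (c : nat -> R) : y * x = s *: (x * y) ->
  \sum_(k < N.+1) c k *: (x ^+ (N - k) * y * x ^+ k)
    = (\sum_(k < N.+1) c k * s ^+ k) *: (x ^+ N * y).
Proof.
move=> yx; rewrite scaler_suml; apply: eq_bigr => k _.
by rewrite -mulrA (mulr_expr_qcomm yx) -scalerAr mulrA -exprD subnK ?leq_ord // scalerA.
Qed.

End QCommutation.

Lemma bmat_pm_cmat n (A : 'M[int]_n) d sigma (i j : 'I_n) :
  symmetrizable_GCM A d -> sign_choice A sigma -> i != j ->
  bmat A d sigma j i = cmat A d i j \/ bmat A d sigma j i = - cmat A d i j.
Proof.
case=> _ _ A_eq0 _ A_sym sign ij.
have cmat_sym : cmat A d j i = cmat A d i j by rewrite /cmat A_sym.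
have [Aij0|Aij_neq0] := eqVneq (A i j) 0.
  by left; rewrite /bmat cmat_sym /cmat Aij0 !mulr0 oppr0 eq_sym (negbTE ij) if_same.
have Aji_neq0 : A j i != 0 by rewrite -A_eq0.
rewrite /bmat cmat_sym eq_sym (negbTE ij); case: ifP => [ji|ji_false].
  by case: (sign j i ji Aji_neq0) => ->; rewrite ?mulN1r ?mul1r; [left|right].
have lt_ij : (i < j)%N by rewrite ltn_neqAle leqNgt ji_false andbT.
by case: (sign i j lt_ij Aij_neq0) => ->; rewrite ?mulN1r ?opprK ?mul1r; [right|left].
Qed.

Lemma qcomm_serre_rels n (A : 'M[int]_n) d sigma (P : algType Qq) (e : 'I_n -> P) :
  symmetrizable_GCM A d -> sign_choice A sigma ->
  qcomm_rels (bmat A d sigma) e -> serre_rels A d e.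
Proof.
move=> GCM sign qcomm i j ij /=; have [_ A_le0 _ [d_gt0 _] _] := GCM.
set m := `|A i j|%N.
have Aij : A i j = - m%:Z by rewrite /m lez0_abs ?opprK // A_le0.
have -> : `|1 - A i j|%N = m.+1 by rewrite Aij opprK -(add1n m).
rewrite (qcomm_scaled_sum _ (fun k => (-1) ^+ k * qbinom (qq ^+ d i) m.+1 k) (qcomm j i)).
rewrite serre_coef_sum ?scale0r //; first by move=> k; apply: qint_qqXn_neq0 (d_gt0 i).
have cmat_ij : cmat A d i j = - (d i * m)%N%:Z by rewrite /cmat Aij mulrN -PoszM.
rewrite -exprM; case: (bmat_pm_cmat GCM sign ij) => ->; rewrite cmat_ij ?opprK.
- by left; rewrite -invr_expz.
- by right.
Qed.

Section PresentedAlgebras.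
Variables (K : fieldType) (U V : algType K) (n : nat) (x : 'I_n -> U) (y : 'I_n -> V).
Variable f : {lrmorphism U -> V}.
Hypothesis f_gen : forall i, f (x i) = y i.

Lemma lrmorph_monom_sum (s : seq (seq 'I_n * K)) :
  f (\sum_(p <- s) p.2 *: monom x p.1) = \sum_(p <- s) p.2 *: monom y p.1.
Proof.
rewrite raddf_sum; apply: eq_bigr => p _; apply: etrans (linearZZ f p.2 _) _.
by rewrite /monom rmorph_prod; congr (_ *: _); apply: eq_bigr => i _; apply: f_gen.
Qed.

Lemma lrmorph_in_weight beta v : in_weight x beta v -> in_weight y beta (f v).
Proof. by move=> [s [s_wt ->]]; exists s; rewrite lrmorph_monom_sum. Qed.

Lemma lrmorph_surj : (forall w, in_span y w) -> forall w, exists v, f v = w.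
Proof.
move=> y_span w; have [s ->] := y_span w.
by exists (\sum_(p <- s) p.2 *: monom x p.1); apply: lrmorph_monom_sum.
Qed.

End PresentedAlgebras.

Theorem proposition4p2 (n : nat) (A : 'M[int]_n) (d : 'I_n -> nat)
    (sigma : 'I_n -> 'I_n -> int)
    (U : algType Qq) (E : 'I_n -> U) (P : algType Qq) (e : 'I_n -> P) :
  symmetrizable_GCM A d -> sign_choice A sigma ->
  presents E (serre_rels A d) ->
  presents e (qcomm_rels (bmat A d sigma)) ->
  exists pi : {lrmorphism U -> P},
    [/\ (forall i, pi (E i) = e i),
        (forall beta v, in_weight E beta v -> in_weight e beta (pi v)),
        (forall w : P, exists v : U, pi v = w) &
        (forall pi' : {lrmorphism U -> P},
           (forall i, pi' (E i) = e i) ->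
           (forall beta v, in_weight E beta v -> in_weight e beta (pi' v)) ->
           (forall w : P, exists v : U, pi' v = w) ->
           pi' =1 pi)].
Proof.
move=> GCM sign [_ _ U_univ U_ext] [e_qcomm e_span _ _].
have [pi pi_gen] := U_univ P e (qcomm_serre_rels GCM sign e_qcomm).
exists pi; split=> //.
- by move=> beta v; apply: lrmorph_in_weight.
- exact: lrmorph_surj.
- by move=> pi' pi'_gen _ _; apply: U_ext => i; rewrite pi_gen pi'_gen.
Qed.
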